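(* Let $G$ be an $N$-player normal-form game in which each player has $T$ actions, and let $f$ be a deterministic, permutation-equivariant embedding function with $f(G)=(\mathbf{A}_1,\dots,\mathbf{A}_N)$, $\mathbf{A}_p=({\bm{a}}^1_p,\dots,{\bm{a}}^T_p)$. If players $p$ and $q$ are symmetric in $G$, then $\mathbf{A}_p$ and $\mathbf{A}_q$ are identical up to permutation, i.e. there is a bijection $\tau$ between the actions of $p$ and those of $q$ such that the embedding of each action $a^i_p$ equals the embedding of the action $\tau(a^i_p)$ of player $q$.
   Context: A normal-form game $G$ with $N$ players, each player $p$ having actions $\mathcal{A}_p=\{a^1_p,\dots,a^T_p\}$, is given by payoff functions $G_p:\mathcal{A}=\mathcal{A}_1\times\dots\times\mathcal{A}_N\to\mathbb{R}$. A strong isomorphism $\phi=((\tau_p)_{p\in[N]},\omega)$ consists of a permutation $\omega$ of the players and, for each player $p$, a bijection $\tau_p$ from the actions of $p$ to the actions of $\omega(p)$; it maps $G$ to the game $\phi(G)$ with $\phi(G)_{\omega(p)}(b)=G_p(a)$ for all $p$ and joint actions $a$, where $b_{\omega(r)}=\tau_r(a_r)$ for every player $r$. A strong automorphism of $G$ is a strong isomorphism with $\phi(G)=G$. Players $p$ and $q$ are symmetric in $G$ if there exists a strong automorphism of $G$ with $\omega(p)=q$. An embedding function $f$ assigns to each game a tuple $(\mathbf{A}_1,\dots,\mathbf{A}_N)$ of action embeddings ${\bm{a}}^t_p\in\mathbb{R}^D$, one per action; $\phi$ acts on such a tuple by placing the embedding of action $a^i_p$ at the position of action $\tau_p(a^i_p)$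 of player $\omega(p)$. $f$ is (permutation-)equivariant if $f(\phi(G))=\phi(f(G))$ for every game $G$ and strong isomorphism $\phi$; deterministic means $f$ is a single-valued function of the game. *)

From Stdlib Require Import Rdefinitions.
From mathcomp Require Import all_boot all_fingroup.
Set Implicit Arguments. Unset Strict Implicit. Unset Printing Implicit Defensive.

(* Players are 'I_N, each player's actions are 'I_T (action a^i_p is index i). *)
Definition joint (N T : nat) := {ffun 'I_N -> 'I_T}.

Definition game (N T : nat) := 'I_N -> joint N T -> R.

Definition embeddings (N T D : nat) := 'I_N -> 'I_T -> ('I_D -> R).

(* Strong isomorphism ((tau_p)_p, omega); tau_p : actions of p -> actions of omega p. *)
Record strong_iso (N T : nat) := StrongIso {
  iso_omega : {perm 'I_N};
  iso_tau : 'I_N -> {perm 'I_T} }.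

(* phi(G)_{omega p}(b) = G_p(a) with b_{omega r} = tau_r(a_r), i.e.
   phi(G)_q(b) = G_{omega^-1 q}(a) with a_r = tau_r^-1 (b_{omega r}). *)
Definition iso_game N T (phi : strong_iso N T) (G : game N T) : game N T :=
  fun q b =>
    G ((iso_omega phi)^-1 q)%g
      [ffun r => ((iso_tau phi r)^-1)%g (b (iso_omega phi r))].

(* phi places the embedding of a^i_p at action tau_p(a^i_p) of player omega(p):
   phi(E)_{omega p}(tau_p i) = E_p(i). *)
Definition iso_emb N T D (phi : strong_iso N T) (E : embeddings N T D)
  : embeddings N T D :=
  fun q j =>
    let p := ((iso_omega phi)^-1 q)%g in E p (((iso_tau phi p)^-1)%g j).

Definition strong_automorphism N T (phi : strong_iso N T) (G : game N T) :=
  iso_game phi G = G.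

Definition symmetric_players N T (G : game N T) (p q : 'I_N) :=
  exists phi : strong_iso N T, strong_automorphism phi G /\ iso_omega phi p = q.

(* f is permutation-equivariant. Determinism: f is a (single-valued) function. *)
Definition equivariant N T D (f : game N T -> embeddings N T D) :=
  forall (G : game N T) (phi : strong_iso N T),
    f (iso_game phi G) = iso_emb phi (f G).

From Stdlib Require Import Rdefinitions.
From mathcomp Require Import all_boot all_fingroup.

Set Implicit Arguments.
Unset Strict Implicit.
Unset Printing Implicit Defensive.

Lemma iso_emb_tau N T D (phi : strong_iso N T) (E : embeddings N T D)
    (p : 'I_N) (i : 'I_T) :
  iso_emb phi E (iso_omega phi p) (iso_tau phi p i) = E p i.
Proof. by rewrite /iso_emb /= !permK. Qed.

Lemma equivariant_automorphism_emb N T D (f : game N T -> embeddings N T D)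
    (G : game N T) (phi : strong_iso N T) :
  equivariant f -> strong_automorphism phi G -> iso_emb phi (f G) = f G.
Proof. by move=> Hf autG; rewrite -(Hf G phi) autG. Qed.

Theorem proposition2 (N T D : nat) (f : game N T -> embeddings N T D)
  (Hf : equivariant f) (G : game N T) (p q : 'I_N) :
  symmetric_players G p q ->
  exists tau : {perm 'I_T}, forall i : 'I_T, f G p i = f G q (tau i).
Proof.
move=> [phi [autG <-]]; exists (iso_tau phi p) => i.
by rewrite -[in RHS](equivariant_automorphism_emb Hf autG) iso_emb_tau.
Qed.
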